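(* Let $\mathcal X$ be a compact set in a normed space (dual norm $\|\cdot\|_*$), and let $l_1,\dots,l_N$ and $v_1,\dots,v_N$ be differentiable functions on $\mathcal X$. Write $l_{1:n}=\sum_{m=1}^nl_m$ ($l_{1:0}\equiv0$). Suppose in each round $n$, $l_{1:n}$ is $\mu_{1:n}$-strongly convex for some $\mu_{1:n}>0$, $v_{n+1}$ is a (possibly nonconvex) function such that $l_{1:n}+v_{n+1}$ is convex (and $v_1$ convex), and the learner plays FTL with prediction: $x_{n}\in\operatorname{arg\,min}_{x\in\mathcal X}(l_{1:n-1}+v_n)(x)$. Then, with $x_n^\star\in\operatorname{arg\,min}_{x\in\mathcal X}l_{1:n}(x)$, $$\sum_{n=1}^N\big(l_{1:n}(x_n)-l_{1:n}(x_n^\star)\big)\le\sum_{n=1}^N\frac1{2\mu_{1:n}}\|\nabla l_n(x_n)-\nabla v_n(x_n)\|_*^2.$$ *)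

From HB Require Import structures.
From mathcomp Require Import all_boot all_order all_algebra.
From mathcomp Require Import all_classical all_reals all_analysis.
Set Implicit Arguments. Unset Strict Implicit. Unset Printing Implicit Defensive.
Import Order.TTheory GRing.Theory Num.Theory.
Import numFieldNormedType.Exports.
Local Open Scope classical_set_scope.
Local Open Scope ring_scope.

Section defs.
Context {R : realType} {V : normedModType R}.

Definition convex_subset (X : set V) : Prop :=
  forall a b (t : R), X a -> X b -> 0 <= t <= 1 -> X (t *: a + (1 - t) *: b).

Definition convex_on (X : set V) (f : V -> R) : Prop :=
  forall a b (t : R), X a -> X b -> 0 <= t <= 1 ->
    f (t *: a + (1 - t) *: b) <= t * f a + (1 - t) * f b.

Definition strongly_convex_on (X : set V) (mu : R) (f : V -> R) : Prop :=
  forall a b (t : R), X a -> X b -> 0 <= t <= 1 ->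
    f (t *: a + (1 - t) *: b)
      <= t * f a + (1 - t) * f b - mu / 2 * t * (1 - t) * `|a - b| ^+ 2.

Definition dual_norm (g : V -> R) : R :=
  sup [set `|g h| | h in [set h : V | `|h| <= 1]].

Definition is_argmin (X : set V) (f : V -> R) (x : V) : Prop :=
  X x /\ forall y, X y -> f x <= f y.

End defs.

Definition cumul {R : realType} {V : normedModType R}
  (l : nat -> V -> R) (n : nat) : V -> R :=
  fun x => \sum_(1 <= m < n.+1) l m x.

From HB Require Import structures.
From mathcomp Require Import all_boot all_order all_algebra.
From mathcomp Require Import all_classical all_reals all_analysis.
From mathcomp Require Import ring lra.
Import Order.TTheory GRing.Theory Num.Theory.
Import numFieldNormedType.Exports.
Local Open Scope classical_set_scope.
Local Open Scope ring_scope.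

(* Each round is bounded separately.  Write [l_{1:n} = F + g] with
   [F = l_{1:n-1} + v_n], minimized by [x_n], and [g = l_n - v_n], and let
   [y] be the minimizer of [l_{1:n}].  Strong convexity of [l_{1:n}] along
   the segment from [x_n] to [y], together with the minimality of [x_n] for
   [F], gives in the limit [t -> 0+]
   [dg(x_n)(y - x_n) <= l_{1:n}(y) - l_{1:n}(x_n) - mu/2 |y - x_n|^2],
   and Young's inequality turns the dual-norm bound on [dg(x_n)] into
   [(2 mu)^-1 |dg(x_n)|_*^2]. *)

Lemma young_mul_le {R : realFieldType} (a b : R) {mu : R} :
  0 < mu -> a * b <= (2 * mu)^-1 * a ^+ 2 + mu / 2 * b ^+ 2.
Proof.
move=> mu_gt0; rewrite -subr_ge0.
have -> : (2 * mu)^-1 * a ^+ 2 + mu / 2 * b ^+ 2 - a * b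
          = (2 * mu)^-1 * (a - mu * b) ^+ 2 by field; rewrite gt_eqF.
by rewrite mulr_ge0 ?sqr_ge0 // invr_ge0 mulr_ge0 // ltW.
Qed.

Lemma norm_linear_le_dual_norm (R : realType) (V : normedModType R)
    (f : {linear V -> R}) :
  continuous f -> forall h, `|f h| <= dual_norm f * `|h|.
Proof.
move=> f_cont h.
have [r r_gt0 f_le] : exists2 r : R, 0 < r & forall k, `|f k| <= r * `|k|.
  exact/pinfty_ex_gt0/linear_boundedP/continuous_linear_bounded/f_cont.
have f_ub : has_ubound [set `|f k| | k in [set k : V | `|k| <= 1]].
  exists r => _ [k /= k_le1 <-].
  by apply: le_trans (f_le k) _; rewrite ler_piMr // ltW.
have [->|h_neq0] := eqVneq h 0; first by rewrite linear0 !normr0 mulr0.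
have h_gt0 : 0 < `|h| by rewrite normr_gt0.
have unit_h : `|(`|h|^-1 *: h)| <= 1.
  by rewrite normrZ ger0_norm ?invr_ge0 // mulVf ?gt_eqF.
have := ub_le_sup f_ub (ex_intro2 _ _ (`|h|^-1 *: h) unit_h erefl).
rewrite linearZ /= normrM ger0_norm ?invr_ge0 // -(ler_pM2l h_gt0).
by rewrite mulrA mulfV ?gt_eqF // mul1r mulrC.
Qed.

Section perturbed_minimizer.
Context {R : realType} {V : normedModType R}.
Context {X : set V} {F g : V -> R} {mu : R} {z y : V}.
Hypotheses (X_convex : convex_subset X) (Xz : X z) (Xy : X y)
  (F_min : forall w, X w -> F z <= F w)
  (Fg_sc : strongly_convex_on X mu (F \+ g)).

Lemma perturbation_quotient_le (t : R) : 0 < t <= 1 ->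
  t^-1 * (g (t *: (y - z) + z) - g z)
    <= (F \+ g) y - (F \+ g) z - mu / 2 * (1 - t) * `|y - z| ^+ 2.
Proof.
move=> /andP[t_gt0 t_le1].
have t01 : 0 <= t <= 1 by rewrite ltW.
have segmentE : t *: y + (1 - t) *: z = t *: (y - z) + z.
  by rewrite scalerBr scalerBl scale1r addrA addrAC.
have := Fg_sc _ _ _ Xy Xz t01; rewrite segmentE /= => sc.
have := F_min _ (X_convex _ _ _ Xy Xz t01); rewrite segmentE => F_le.
rewrite ler_pdivrMl //.
set A := `|y - z| ^+ 2 in sc *.
have -> : t * (F y + g y - (F z + g z) - mu / 2 * (1 - t) * A)
  = t * (F y + g y) + (1 - t) * (F z + g z) - mu / 2 * t * (1 - t) * A
    - (F z + g z) by ring.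
lra.
Qed.

Lemma perturbation_derive_le : derivable g z (y - z) ->
  'D_(y - z) g z <= (F \+ g) y - (F \+ g) z - mu / 2 * `|y - z| ^+ 2.
Proof.
move=> /cvg_dnbhs_at_right g_quot.
have gap_cvg : (fun t => (F \+ g) y - (F \+ g) z - mu / 2 * (1 - t) * `|y - z| ^+ 2)
    @ 0^'+ --> (F \+ g) y - (F \+ g) z - mu / 2 * (1 - 0) * `|y - z| ^+ 2.
  apply: cvg_at_right_filter; apply: cvgB; first exact: cvg_cst.
  apply: cvgM; last exact: cvg_cst.
  by apply: cvgM; [exact: cvg_cst | apply: cvgB; [exact: cvg_cst | exact: cvg_id]].
rewrite subr0 mulr1 in gap_cvg.
apply: (ler_cvg_to g_quot gap_cvg).
near=> t; apply: perturbation_quotient_le.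
apply/andP; split; near: t; first exact: nbhs_right_gt.
by apply: nbhs_right_le; exact: ltr01.
Unshelve. all: by end_near.
Qed.

Lemma perturbed_minimizer_gap (D : R) : 0 < mu -> derivable g z (y - z) ->
  - 'D_(y - z) g z <= D * `|y - z| ->
  (F \+ g) z - (F \+ g) y <= (2 * mu)^-1 * D ^+ 2.
Proof.
move=> mu_gt0 g_der D_bound.
have := perturbation_derive_le g_der.
have := young_mul_le D `|y - z| mu_gt0.
lra.
Qed.

End perturbed_minimizer.

Lemma cumulS (R : realType) (V : normedModType R) (l : nat -> V -> R) n w :
  (0 < n)%N -> cumul l n w = cumul l n.-1 w + l n w.
Proof. by move=> n_gt0; rewrite /cumul prednK // big_nat_recr. Qed.

Theorem lemma16 (R : realType) (V : normedModType R) (X : set V) (N : nat)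
  (l v : nat -> V -> R) (mu : nat -> R) (x xs : nat -> V) :
  compact X -> convex_subset X ->
  (forall n, (1 <= n <= N)%N -> forall y, X y ->
     differentiable (l n) y /\ differentiable (v n) y) ->
  (forall n, (1 <= n <= N)%N -> 0 < mu n /\ strongly_convex_on X (mu n) (cumul l n)) ->
  convex_on X (v 1%N) ->
  (forall n, (1 <= n < N)%N -> convex_on X (cumul l n \+ v n.+1)) ->
  (forall n, (1 <= n <= N)%N -> is_argmin X (cumul l n.-1 \+ v n) (x n)) ->
  (forall n, (1 <= n <= N)%N -> is_argmin X (cumul l n) (xs n)) ->
  \sum_(1 <= n < N.+1) (cumul l n (x n) - cumul l n (xs n))
    <= \sum_(1 <= n < N.+1)
         (2 * mu n)^-1 * dual_norm (fun h => 'd (l n) (x n) h - 'd (v n) (x n) h) ^+ 2.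
Proof.
move=> _ X_convex diff sc _ _ x_argmin xs_argmin.
apply: ler_sum_nat => n /andP[n_ge1 n_leN].
have n_range : (1 <= n <= N)%N by rewrite n_ge1.
have [Xx x_min] := x_argmin n n_range.
have [Xxs _] := xs_argmin n n_range.
have [dl dv] := diff n n_range (x n) Xx.
have [mu_gt0 cumul_sc] := sc n n_range.
have dlv : differentiable (l n - v n) (x n) by exact: differentiableB.
have cumulE : cumul l n = (cumul l n.-1 \+ v n) \+ (l n - v n).
  by apply/funext => w; rewrite cumulS // !fctE /=; ring.
have -> : (fun h => 'd (l n) (x n) h - 'd (v n) (x n) h) = 'd (l n - v n) (x n).
  by rewrite diffB.
rewrite cumulE in cumul_sc *.
apply: (perturbed_minimizer_gap X_convex Xx Xxs x_min cumul_sc _ mu_gt0).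
  exact: diff_derivable.
rewrite deriveE //; apply: le_trans (ler_norm _) _; rewrite normrN.
apply: (@norm_linear_le_dual_norm _ _ ('d (l n - v n) (x n))).
exact: diff_continuous.
Qed.
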